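(* Let $\Gamma$ be a stable group with finite presentation $\langle X\mid R\rangle$, corresponding to the epimorphism $\pi:\mathbb{F}\twoheadrightarrow\Gamma$ from the free group $\mathbb{F}$ on $X$. If $\pi$ is not an isomorphism, then for all $x\ge1$, $$\frac{1}{\|R\|}F_\Gamma^\pi(x)\le H_{\langle X\mid R\rangle}(x)\le F_\Gamma^\pi(x)\,D_{\langle X\mid R\rangle}(F_\Gamma^\pi(x)).$$ If $\pi$ is an isomorphism, then $H_{\langle X\mid R\rangle}(x)=0$ for all $x\ge1$.
   Context: $\ker\pi$ is the normal closure of the finite set $R$. For finite $\Omega$, $d_\Omega(\sigma,\tau)=|\{\omega:\sigma(\omega)\ne\tau(\omega)\}|/|\Omega|$. For $E\subseteq\mathbb{F}$, a homomorphism $\phi:\mathbb{F}\to\mathrm{Sym}(\Omega)$ is a solution for $E$ if $E\subseteq\ker\phi$, and a $(\delta,E)$-almost-solution if $d_\Omega(\phi(r),\mathrm{id})<\delta$ for all $r\in E$; $\rho,\phi$ are $\epsilon$-close if $d_\Omega(\rho(x),\phi(x))<\epsilon$ for all $x\in X$. $\|E\|=\sum_{r\in E}|r|$ (word length in $X$). $F_\Gamma^\pi(x)$ is the infimum of $\|E\|/\delta$ over pairs with $\delta\in(0,1]$, $E\subseteq\ker\pi$ finite, such that every $(\delta,E)$-almost-solution is $x^{-1}$-close to a solution for $\ker\pi$; $\Gamma$ stable means such pairs exist for all $x$. $H_{\langle X\mid R\rangle}(x)$ is the infimum of $1/\delta$ over all $\delta>0$ such that every $(\delta,R)$-almost-solution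 is $x^{-1}$-close to a solution for $\ker\pi$. The Dehn function: $D_{\langle X\mid R\rangle}(n)$ is the maximum, over $w\in\ker\pi$ with $|w|\le n$, of the least $m$ such that $w=\prod_{i=1}^m u_ir_iu_i^{-1}$ with $u_i\in\mathbb{F}$, $r_i\in R^{\pm1}$; it is extended to $[1,\infty)$ by $D(x)=D(\lfloor x\rfloor)$. *)

From HB Require Import structures.
From mathcomp Require Import all_boot all_order all_algebra all_fingroup.
From mathcomp Require Import classical_sets reals.
Set Implicit Arguments. Unset Strict Implicit. Unset Printing Implicit Defensive.
Import Order.TTheory GRing.Theory Num.Theory.
Local Open Scope ring_scope.

Section FreeGroup.
Variable X : finType.

(* A word in X^{+-1}: a letter (x, b) is x if b = false, x^-1 if b = true.
   Elements of the free group F on X are words up to free reduction. *)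
Definition word := seq (X * bool).

Definition red_step (a : X * bool) (s : word) : word :=
  match s with
  | b :: s' => if (b.1 == a.1) && (b.2 != a.2) then s' else a :: s
  | [::] => [:: a]
  end.

Definition reduce (w : word) : word := foldr red_step [::] w.
Definition reduced (w : word) : bool := reduce w == w.
Definition freely_eq (u v : word) : Prop := reduce u = reduce v.
Definition wlen (w : word) : nat := size (reduce w).

Definition inv_word (w : word) : word := rev (map (fun a => (a.1, ~~ a.2)) w).

(* u r^{+-1} u^{-1} for p = (u, r, e), e = true meaning r^{-1} *)
Definition conj_rel (p : word * word * bool) : word :=
  p.1.1 ++ (if p.2 then inv_word p.1.2 else p.1.2) ++ inv_word p.1.1.

Definition has_area (R : seq word) (w : word) (m : nat) : Prop :=
  exists l : seq (word * word * bool),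
    [/\ size l = m, (forall p, p \in l -> p.1.2 \in R)
      & freely_eq w (flatten (map conj_rel l))].

Definition in_ker (R : seq word) (w : word) : Prop := exists m, has_area R w m.

(* pi : F -> <X | R> is injective (hence an isomorphism) *)
Definition pi_is_iso (R : seq word) : Prop :=
  forall w, in_ker R w -> reduce w = [::].

Definition wnorm (E : seq word) : nat := \sum_(r <- E) wlen r.

Section Perm.
Variable Om : finType.
Definition ev_letter (f : X -> {perm Om}) (a : X * bool) : {perm Om} :=
  if a.2 then ((f a.1)^-1)%g else f a.1.
Definition ev_word (f : X -> {perm Om}) (w : word) : {perm Om} :=
  foldr (fun a acc => (ev_letter f a * acc)%g) 1%g w.

Definition dist {Rr : realType} (s t : {perm Om}) : Rr :=
  (#|[set o | s o != t o]|%:R / #|Om|%:R)%R.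

Definition is_solution_ker (R : seq word) (f : X -> {perm Om}) : Prop :=
  forall w, in_ker R w -> ev_word f w = 1%g.

Definition almost_solution {Rr : realType} (d : Rr) (E : seq word)
  (f : X -> {perm Om}) : Prop :=
  forall r, r \in E -> (dist (ev_word f r) 1%g < d)%R.

Definition eps_close {Rr : realType} (e : Rr) (f g : X -> {perm Om}) : Prop :=
  forall x, (dist (f x) (g x) < e)%R.
End Perm.

Definition good_pair {Rr : realType} (R : seq word) (d : Rr) (E : seq word)
  (x : Rr) : Prop :=
  forall (Om : finType), (0 < #|Om|)%N ->
  forall rho : X -> {perm Om}, almost_solution d E rho ->
  exists phi : X -> {perm Om}, is_solution_ker R phi /\ eps_close (x^-1)%R rho phi.

(* finite subsets E of ker pi, represented as duplicate-free lists of
   reduced words *)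
Definition admissible_E (R : seq word) (E : seq word) : Prop :=
  [/\ all reduced E, uniq E & forall r, r \in E -> in_ker R r].

Definition stable_pres {Rr : realType} (R : seq word) : Prop :=
  forall x : Rr, (0 < x)%R ->
  exists (d : Rr) (E : seq word),
    [/\ (0 < d)%R, (d <= 1)%R, admissible_E R E & good_pair R d E x].

Local Open Scope classical_set_scope.

Definition F_pi {Rr : realType} (R : seq word) (x : Rr) : Rr :=
  inf [set v : Rr | exists (d : Rr) (E : seq word),
         [/\ (0 < d)%R, (d <= 1)%R, admissible_E R E, good_pair R d E x
           & v = ((wnorm E)%:R / d)%R]].

Definition H_pres {Rr : realType} (R : seq word) (x : Rr) : Rr :=
  inf [set v : Rr | exists d : Rr,
         [/\ (0 < d)%R, good_pair R d R x & v = (d^-1)%R]].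

Definition is_area (R : seq word) (w : word) (m : nat) : Prop :=
  has_area R w m /\ forall k, has_area R w k -> (m <= k)%N.

Definition Dehn_nat {Rr : realType} (R : seq word) (n : nat) : Rr :=
  sup [set v : Rr | exists (w : word) (m : nat),
         [/\ in_ker R w, (wlen w <= n)%N, is_area R w m & v = m%:R]].

Definition Dehn {Rr : realType} (R : seq word) (x : Rr) : Rr :=
  Dehn_nat R (Num.truncn x).

End FreeGroup.

From HB Require Import structures.
From mathcomp Require Import all_boot all_order all_algebra all_fingroup.
From mathcomp Require Import boolp classical_sets reals.
Import Order.TTheory GRing.Theory Num.Theory.
Set Implicit Arguments. Unset Strict Implicit. Unset Printing Implicit Defensive.

(* The normalized Hamming distance d(s, 1) counts moved points, so it is subadditive and
   invariant under conjugation and inversion: if w is a product of m conjugates of relators,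
   then d(rho(w), 1) <= m * max_(r in R) d(rho(r), 1).  Hence if (d, E) is a good pair and
   every r in E has area at most D(||E||), every (d / D(||E||), R)-almost-solution is a
   (d, E)-almost-solution, and H <= D(||E||) / d <= (||E|| / d) * D(||E||).  Since d <= 1,
   a pair with ||E|| / d close to F has ||E|| <= floor F, which gives H <= F * D(F).
   Conversely a good d for R yields the admissible pair (d, R), so F <= ||R|| / d when
   d <= 1, while for d > 1 every assignment is an almost-solution and F = 0.  When pi is
   injective every assignment is a solution, so H = 0. *)

Section Evaluation.
Variables (X Om : finType) (f : X -> {perm Om}).
Implicit Types (u v w : word X).

Lemma ev_word_cat u v : ev_word f (u ++ v) = (ev_word f u * ev_word f v)%g.
Proof. by elim: u => [|a u IH] /=; rewrite ?mul1g // IH mulgA. Qed.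

Lemma ev_red_step a w : ev_word f (red_step a w) = (ev_letter f a * ev_word f w)%g.
Proof.
case: w => [|b w] //=; case: ifP => // /andP[/eqP eq1 neq2].
rewrite mulgA /ev_letter eq1.
have -> : b.2 = ~~ a.2 by case: (b.2) (a.2) neq2 => [] [].
by case: (a.2); rewrite /= ?mulVg ?mulgV mul1g.
Qed.

Lemma ev_word_reduce w : ev_word f (reduce w) = ev_word f w.
Proof. by elim: w => [|a w IH] //=; rewrite ev_red_step IH. Qed.

Lemma ev_word_freely_eq u v : freely_eq u v -> ev_word f u = ev_word f v.
Proof. by move=> uv; rewrite -ev_word_reduce uv ev_word_reduce. Qed.

Lemma ev_word_inv w : ev_word f (inv_word w) = (ev_word f w)^-1%g.
Proof.
elim: w => [|a w IH] /=; first by rewrite invg1.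
rewrite /inv_word /= rev_cons -cats1 ev_word_cat -/(inv_word w) IH /= mulg1 invMg.
by rewrite /ev_letter /=; case: (a.2); rewrite ?invgK.
Qed.

End Evaluation.

Section MovedPoints.
Variable Om : finType.
Implicit Types s t u : {perm Om}.

Definition moved s : {set Om} := [set o | s o != o].

Lemma card_moved1 : #|moved 1| = 0.
Proof. by apply: eq_card0 => o; rewrite !inE perm1 eqxx. Qed.

Lemma card_moved_mul s t : #|moved (s * t)| <= #|moved s| + #|moved t|.
Proof.
have sub : moved (s * t) \subset moved s :|: moved t.
  apply/fintype.subsetP => o; rewrite !inE permM.
  by case: (eqVneq (s o) o) => [->|]; rewrite ?orbT.
by rewrite (leq_trans (subset_leq_card sub)) // cardsU leq_subr.
Qed.

Lemma card_moved_conj u s : #|moved (u * s * u^-1)| = #|moved s|.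
Proof.
rewrite -(card_preimset (moved s) (@perm_inj _ u)).
by apply: eq_card => o; rewrite !inE !permM (can2_eq (permKV u) (permK u)).
Qed.

Lemma card_moved_inv s : #|moved s^-1| = #|moved s|.
Proof.
rewrite -(card_preimset (moved s) (@perm_inj _ s^-1)).
by apply: eq_card => o; rewrite !inE -permM mulVg perm1 eq_sym.
Qed.

End MovedPoints.

Lemma card_moved_relator_product (X Om : finType) (f : X -> {perm Om})
    (l : seq (word X * word X * bool)) :
  #|moved (ev_word f (flatten (map (@conj_rel X) l)))|
    <= \sum_(p <- l) #|moved (ev_word f p.1.2)|.
Proof.
elim: l => [|p l IH] /=; first by rewrite big_nil card_moved1.
rewrite big_cons ev_word_cat (leq_trans (card_moved_mul _ _)) // leq_add //.
rewrite /conj_rel !ev_word_cat ev_word_inv mulgA card_moved_conj.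
by case: (p.2); rewrite ?ev_word_inv ?card_moved_inv.
Qed.

Section Areas.
Variables (X : finType) (R : seq (word X)).
Implicit Types (u v w : word X).

Lemma has_area_reduce u v m : reduce u = reduce v -> has_area R u m -> has_area R v m.
Proof. by move=> uv [l [sl lR ul]]; exists l; split; rewrite // /freely_eq -uv. Qed.

Lemma is_area_reduce u v m : reduce u = reduce v -> is_area R u m -> is_area R v m.
Proof.
move=> uv [um umin]; split; first exact: has_area_reduce um.
by move=> k /(has_area_reduce (esym uv)); apply: umin.
Qed.

Lemma is_area_inj w m m' : is_area R w m -> is_area R w m' -> m = m'.
Proof. by move=> [hm minm] [hm' minm']; apply/eqP; rewrite eqn_leq minm // minm'. Qed.

Lemma is_area_nil : is_area R [::] 0.
Proof. by split=> //; exists [::]. Qed.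

Lemma in_ker_is_area w : in_ker R w -> exists m, is_area R w m.
Proof.
move=> [k hk]; have ex : exists m, `[< has_area R w m >] by exists k; apply/asboolP.
by case: (ex_minnP ex) => m /asboolP hm minm; exists m; split => // j /asboolP /minm.
Qed.

Lemma in_ker_relator r : r \in R -> in_ker R r.
Proof.
move=> rR; exists 1, [:: ([::], r, false)]; split => //.
  by move=> p; rewrite inE => /eqP ->.
by rewrite /freely_eq /conj_rel /= !cats0.
Qed.

Lemma areas_bounded_on (L : seq (word X)) :
  exists B, forall w m, reduce w \in L -> is_area R w m -> m <= B.
Proof.
elim: L => [|s L [B HB]]; first by exists 0.
have [[w0 [m0 [<- h0]]] | none] := pselect (exists w0 m0, reduce w0 = s /\ is_area R w0 m0).
  exists (maxn B m0) => w m; rewrite inE => /orP[/eqP e h | wL h].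
    by rewrite (is_area_inj h (is_area_reduce (esym e) h0)) leq_maxr.
  by rewrite leq_max (HB w m wL h).
exists B => w m; rewrite inE => /orP[/eqP e h | wL h]; last exact: HB wL h.
by case: none; exists w, m.
Qed.

Definition words_upto n : seq (word X) :=
  flatten [seq [seq tval t | t <- enum {: k.-tuple (X * bool)}] | k <- iota 0 n.+1].

Lemma mem_words_upto n w : size w <= n -> w \in words_upto n.
Proof.
move=> wn; apply/flatten_mapP; exists (size w); first by rewrite mem_iota ltnS.
by apply: (map_f (@tval _ _) (_ : in_tuple w \in _)); rewrite mem_enum.
Qed.

Lemma areas_bounded n : exists B, forall w m, wlen w <= n -> is_area R w m -> m <= B.
Proof.
have [B HB] := areas_bounded_on (words_upto n).
by exists B => w m wn; apply: HB; apply: mem_words_upto.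
Qed.

Lemma wlen_le_wnorm (E : seq (word X)) r : r \in E -> wlen r <= wnorm E.
Proof. by move=> rE; rewrite /wnorm (big_rem r rE) leq_addr. Qed.

End Areas.

Local Open Scope ring_scope.
Local Open Scope classical_set_scope.

Lemma sum_lt_size_mul (R : numDomainType) (T : eqType) (l : seq T) (F : T -> R) c :
  l != [::] -> {in l, forall p, F p < c} -> \sum_(p <- l) F p < (size l)%:R * c.
Proof.
move=> l0 Fc; rewrite -sum1_size natr_sum mulr_suml !big_seq.
apply: ltr_sum => [|p pl]; last by rewrite mul1r Fc.
by case: l l0 {Fc} => //= p l _; rewrite mem_head.
Qed.

Lemma le_inf_mulr (R : realType) (S : set R) a b c :
  S !=set0 -> has_lbound S -> 0 <= c -> inf S < b ->
  (forall v, S v -> v < b -> a <= v * c) -> a <= inf S * c.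
Proof.
move=> S0 Slb c0 Sb Sa.
have [v0 Sv0 v0b] : exists2 v, S v & v < b.
  have [|v Sv] := inf_adherent (_ : 0 < b - inf S) (conj S0 Slb); first by rewrite subr_gt0.
  by rewrite addrC subrK; exists v.
move: c0; rewrite le0r => /predU1P[c0 | c0]; first by have := Sa _ Sv0 v0b; rewrite c0 !mulr0.
rewrite -ler_pdivrMr //; apply: lb_le_inf S0 _ => v Sv; rewrite ler_pdivrMr //.
have [vb | bv] := ltP v b; first exact: Sa.
by rewrite (le_trans (Sa _ Sv0 v0b)) // ler_wpM2r ?ltW // (lt_le_trans v0b).
Qed.

Section Distance.
Variables (Rr : realType) (Om : finType).
Implicit Types s : {perm Om}.

Lemma dist1E s : dist s 1 = #|moved s|%:R / #|Om|%:R :> Rr.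
Proof. by rewrite /dist; congr (_%:R / _); apply: eq_card => o; rewrite !inE perm1. Qed.

Lemma dist_refl s : dist s s = 0 :> Rr.
Proof. by rewrite /dist (_ : #|_| = 0)%N ?mul0r //; apply: eq_card0 => o; rewrite !inE eqxx. Qed.

Lemma dist1_le1 s : (0 < #|Om|)%N -> dist s 1 <= 1 :> Rr.
Proof. by move=> Om0; rewrite dist1E ler_pdivrMr ?ltr0n // mul1r ler_nat max_card. Qed.

Lemma dist1_relator_product_le (X : finType) (f : X -> {perm Om})
    (l : seq (word X * word X * bool)) :
  dist (ev_word f (flatten (map (@conj_rel X) l))) 1
    <= \sum_(p <- l) dist (ev_word f p.1.2) 1 :> Rr.
Proof.
rewrite dist1E; under eq_bigr do rewrite dist1E.
by rewrite -mulr_suml -natr_sum ler_wpM2r ?invr_ge0 // ler_nat card_moved_relator_product.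
Qed.

End Distance.

Section Bounds.
Variables (Rr : realType) (X : finType) (R : seq (word X)).
Implicit Types (d M x : Rr) (E : seq (word X)).

Lemma almost_solution_of_area_bound (Om : finType) (rho : X -> {perm Om}) d d' M E :
  0 < d -> d' * M <= d ->
  (forall r, r \in E -> exists m, has_area R r m /\ m%:R <= M) ->
  almost_solution d' R rho -> almost_solution d E rho.
Proof.
move=> d0 d'M areaE rhoR r rE.
have [_ [[l [<- lR /(ev_word_freely_eq rho) ->]] lM]] := areaE r rE.
have [-> | l0] := eqVneq l [::]; first by rewrite /= dist_refl.
have d'0 : 0 <= d'.
  case: l l0 lR {lM} => // p l _ lR.
  apply: ltW; apply: le_lt_trans (rhoR _ (lR _ (mem_head _ _))).
  by rewrite dist1E divr_ge0.
apply: le_lt_trans (dist1_relator_product_le _ _ _) _; apply: lt_le_trans d'M.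
rewrite mulrC; apply: lt_le_trans (sum_lt_size_mul l0 _) _ => [p pl|]; first exact/rhoR/lR.
by rewrite ler_wpM2r.
Qed.

Lemma almost_solution_gt1 (Om : finType) (rho : X -> {perm Om}) d E :
  (0 < #|Om|)%N -> 1 < d -> almost_solution d E rho.
Proof. by move=> Om0 d1 r _; apply: le_lt_trans (dist1_le1 _ _ Om0) d1. Qed.

Lemma good_pair_sub d E d' E' x :
  (forall (Om : finType) (rho : X -> {perm Om}), (0 < #|Om|)%N ->
     almost_solution d' E' rho -> almost_solution d E rho) ->
  good_pair R d E x -> good_pair R d' E' x.
Proof. by move=> sub good Om Om0 rho /(sub _ _ Om0); apply: good. Qed.

Lemma H_pres_ge0 x : 0 <= H_pres R x.
Proof.
rewrite /H_pres; set S := [set v | _].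
have [-> | /set0P S0] := eqVneq S set0; first by rewrite inf0.
by apply: lb_le_inf S0 _ => _ [d [d0 _ ->]]; rewrite invr_ge0 ltW.
Qed.

Lemma H_pres_le_inv x d : 0 < d -> good_pair R d R x -> H_pres R x <= d^-1.
Proof.
move=> d0 good; apply: ge_inf => /=; last by exists d.
by exists 0 => _ [e [e0 _ ->]]; rewrite invr_ge0 ltW.
Qed.

Lemma H_pres_le x d M : 0 < d -> 0 <= M ->
  (forall d', 0 < d' -> d' * M <= d -> good_pair R d' R x) -> H_pres R x <= M / d.
Proof.
move=> d0; rewrite le0r => /predU1P[-> good | M0 good].
  rewrite mul0r; apply/ler_addgt0Pr => e e0; rewrite add0r -[e]invrK.
  by apply: H_pres_le_inv; [|apply: good]; rewrite ?invr_gt0 ?mulr0 ?ltW.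
by rewrite -invf_div; apply: H_pres_le_inv (good _ _ _); rewrite ?divr_gt0 ?divfK ?gt_eqF.
Qed.

Lemma F_pi_le x d E : 0 < d -> d <= 1 -> admissible_E R E -> good_pair R d E x ->
  F_pi R x <= (wnorm E)%:R / d.
Proof.
move=> d0 d1 adm good; apply: ge_inf => /=; last by exists d, E.
by exists 0 => _ [e [E' [e0 _ _ _ ->]]]; rewrite divr_ge0 // ltW.
Qed.

Lemma Dehn_nat_ub n w m : (wlen w <= n)%N -> in_ker R w -> is_area R w m ->
  m%:R <= Dehn_nat R n :> Rr.
Proof.
move=> wn kw am; have [B HB] := areas_bounded R n.
apply: ub_le_sup; last by exists w, m.
by exists B%:R => _ [w' [m' [_ w'n am' ->]]]; rewrite ler_nat (HB w' m').
Qed.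

Lemma Dehn_nat_ge0 n : 0 <= Dehn_nat R n :> Rr.
Proof. by apply: Dehn_nat_ub (is_area_nil R) => //; exists 0%N; case: (is_area_nil R). Qed.

(* The factor ||E|| only matters when ||E|| = 0, that is, when E consists of freely trivial
   words, which have area 0. *)
Lemma area_le_wnorm_Dehn n E r : admissible_E R E -> (wnorm E <= n)%N -> r \in E ->
  exists m, has_area R r m /\ m%:R <= (wnorm E)%:R * Dehn_nat R n :> Rr.
Proof.
move=> [_ _ kerE] En rE; have [/size0nil r0 | r0] := posnP (wlen r).
  exists 0%N; split; last by rewrite mulr_ge0 ?Dehn_nat_ge0.
  by exists [::]; split; rewrite // /freely_eq r0.
have [m am] := in_ker_is_area (kerE r rE); exists m; split; first exact: am.1.
have rn := leq_trans (wlen_le_wnorm rE) En.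
rewrite (le_trans (Dehn_nat_ub rn (kerE r rE) am)) // ler_peMl ?Dehn_nat_ge0 //.
by rewrite ler1n (leq_trans r0) ?wlen_le_wnorm.
Qed.

Lemma good_pair_relators n d d' E x : 0 < d -> admissible_E R E -> (wnorm E <= n)%N ->
  good_pair R d E x -> d' * ((wnorm E)%:R * Dehn_nat R n) <= d -> good_pair R d' R x.
Proof.
move=> d0 adm En good d'M; apply: good_pair_sub good => Om rho _.
by apply: almost_solution_of_area_bound d0 d'M _ => r; apply: area_le_wnorm_Dehn.
Qed.

Lemma H_pres_le_wnorm_Dehn n d E x : 0 < d -> admissible_E R E -> (wnorm E <= n)%N ->
  good_pair R d E x -> H_pres R x <= (wnorm E)%:R / d * Dehn_nat R n.
Proof.
move=> d0 adm En good; rewrite mulrAC; apply: H_pres_le => // [|d' _].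
  by rewrite mulr_ge0 ?Dehn_nat_ge0.
exact: good_pair_relators.
Qed.

Lemma F_pi_div_wnorm_le_inv x d : all (@reduced X) R -> uniq R -> 0 < d ->
  good_pair R d R x -> F_pi R x / (wnorm R)%:R <= d^-1.
Proof.
move=> redR uR d0 good; have [d1 | d1] := lerP d 1.
  have := F_pi_le d0 d1 (And3 redR uR (@in_ker_relator _ R)) good.
  have [-> | R0] := eqVneq (wnorm R) 0%N; first by move=> _; rewrite invr0 mulr0 invr_ge0 ltW.
  by rewrite ler_pdivrMr ?ltr0n ?lt0n // mulrC.
have F0 : F_pi R x <= 0.
  have good1 : good_pair R 1 [::] x.
    by apply: good_pair_sub good => Om rho Om0 _; apply: almost_solution_gt1.
  have adm_nil : admissible_E R [::] by split.
  by have := F_pi_le ltr01 (lexx _) adm_nil good1; rewrite /wnorm big_nil mul0r.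
by rewrite (le_trans (mulr_le0_ge0 F0 _)) ?invr_ge0 // ltW // (lt_trans ltr01).
Qed.

Lemma F_pi_div_wnorm_le_H_pres x : 0 < x -> all (@reduced X) R -> uniq R ->
  @stable_pres X Rr R -> F_pi R x / (wnorm R)%:R <= H_pres R x.
Proof.
move=> x0 redR uR stab; apply: lb_le_inf => [|_ [d [d0 good ->]]]; last first.
  exact: F_pi_div_wnorm_le_inv.
have [d [E [d0 _ adm good]]] := stab x x0.
have [M M0 goodM] : exists2 M : Rr, 0 <= M & forall d', d' * M <= d -> good_pair R d' R x.
  exists ((wnorm E)%:R * Dehn_nat R (wnorm E)); first by rewrite mulr_ge0 ?Dehn_nat_ge0.
  by move=> d'; apply: good_pair_relators d0 adm (leqnn _) good.
have M1 : 0 < M + 1 by rewrite ltr_wpDl.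
exists (d / (M + 1))^-1, (d / (M + 1)); split; rewrite ?divr_gt0 //.
by apply: goodM; rewrite mulrAC ler_pdivrMr // ler_pM2l // lerDl.
Qed.

Lemma H_pres_le_F_pi_Dehn x : 0 < x -> @stable_pres X Rr R ->
  H_pres R x <= F_pi R x * Dehn R (F_pi R x).
Proof.
move=> x0 stab; rewrite /Dehn; set n := Num.truncn (F_pi R x).
have [e [E0 [e0 e1 adm0 good0]]] := stab x x0.
apply: (le_inf_mulr (b := n.+1%:R)); rewrite ?Dehn_nat_ge0 ?truncnS_gt //.
- by exists ((wnorm E0)%:R / e), e, E0.
- by exists 0 => _ [d [E [d0 _ _ _ ->]]]; rewrite divr_ge0 // ltW.
move=> _ [d [E [d0 d1 adm good ->]]] Edn.
have En : (wnorm E <= n)%N.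
  rewrite -ltnS -(ltr_nat Rr); apply: le_lt_trans Edn.
  by rewrite ler_pdivlMr // ler_piMr.
exact: H_pres_le_wnorm_Dehn d0 adm En good.
Qed.

Lemma H_pres_eq0_of_iso x : 0 < x -> pi_is_iso R -> H_pres R x = 0.
Proof.
move=> x0 iso; apply/eqP; rewrite eq_le H_pres_ge0 andbT.
suff all_good d' : 0 < d' -> d' * 0 <= 1 -> good_pair R d' R x.
  by have := H_pres_le ltr01 (lexx 0) all_good; rewrite mul0r.
move=> _ _ Om _ rho _; exists rho; split => [w /iso w1 | y].
  by rewrite -ev_word_reduce w1.
by rewrite dist_refl invr_gt0.
Qed.

End Bounds.

Theorem proposition2p9 (Rr : realType) (X : finType) (R : seq (word X)) :
  all (@reduced X) R -> uniq R -> @stable_pres X Rr R ->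
  ((~ pi_is_iso R) ->
     forall x : Rr, (1 <= x)%R ->
       ((F_pi R x / (wnorm R)%:R <= H_pres R x)%R /\
        (H_pres R x <= F_pi R x * Dehn R (F_pi R x))%R))
  /\
  (pi_is_iso R -> forall x : Rr, (1 <= x)%R -> H_pres R x = 0%R).
Proof.
move=> redR uR stab; split => [_ | iso] x x1; have x0 := lt_le_trans ltr01 x1.
  split; first exact: F_pi_div_wnorm_le_H_pres.
  exact: H_pres_le_F_pi_Dehn.
exact: H_pres_eq0_of_iso.
Qed.
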